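(* Let $\omega=(\alpha^+,\alpha^-,\gamma_1,\gamma_2)\in\Omega$. Then the principal value product representation $$\mathsf{E}_\omega(z)=\lim_{R\to\infty}\prod_{i:\,\alpha_i^+>R^{-2}}(1-\alpha_i^+z)\prod_{i:\,\alpha_i^->R^{-2}}(1+\alpha_i^-z)$$ holds if and only if $$\gamma_1=\lim_{R\to\infty}\left(\sum_{i:\,\alpha_i^+>R^{-2}}\alpha_i^+-\sum_{i:\,\alpha_i^->R^{-2}}\alpha_i^-\right)\quad\text{and}\quad\gamma_2=0.$$
   Context: $\Omega$ is the set of $\omega=(\alpha^+,\alpha^-,\gamma_1,\gamma_2)$ with $\alpha^\pm=(\alpha_1^\pm\ge\alpha_2^\pm\ge\dots\ge0)$ non-increasing sequences of non-negative reals, $\sum_i(\alpha_i^+)^2+\sum_i(\alpha_i^-)^2<\infty$, $\gamma_1\in\mathbb{R}$, $\gamma_2\ge0$. For $\omega\in\Omega$, $\mathsf{E}_\omega(z)=e^{-\gamma_1 z-\frac{\gamma_2}{2}z^2}\prod_{i}e^{z\alpha_i^+}(1-z\alpha_i^+)\prod_{i}e^{-z\alpha_i^-}(1+z\alpha_i^-)$. *)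

From Stdlib Require Import Reals.
From Coquelicot Require Import Coquelicot.
Open Scope R_scope.

(* Membership in Omega: alpha^+ = ap, alpha^- = am (indexed from 0),
   gamma_1 = g1, gamma_2 = g2. *)
Definition in_Omega (ap am : nat -> R) (g1 g2 : R) : Prop :=
  (forall i, 0 <= ap i) /\ (forall i, ap (S i) <= ap i) /\
  (forall i, 0 <= am i) /\ (forall i, am (S i) <= am i) /\
  ex_series (fun i => ap i ^ 2 + am i ^ 2) /\
  0 <= g2.

Definition Cexp (z : C) : C :=
  (exp (Re z) * cos (Im z), exp (Re z) * sin (Im z)).

Fixpoint cprod (f : nat -> C) (n : nat) : C :=
  match n with
  | O => 1%C
  | S m => Cmult (cprod f m) (f m)
  end.

Definition limC (u : nat -> C) : C :=
  @lim C_CompleteNormedModule (filtermap u eventually).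

Definition cinfprod (f : nat -> C) : C := limC (cprod f).

(* E_omega(z) = e^{-g1 z - g2 z^2 / 2}
     * prod_i e^{z ap_i} (1 - z ap_i) * prod_i e^{-z am_i} (1 + z am_i). *)
Definition Eomega (ap am : nat -> R) (g1 g2 : R) (z : C) : C :=
  Cmult (Cmult
    (Cexp (Cminus (Copp (Cmult (RtoC g1) z))
                  (Cmult (RtoC (g2 / 2)) (Cmult z z))))
    (cinfprod (fun i => Cmult (Cexp (Cmult z (RtoC (ap i))))
                              (Cminus 1 (Cmult z (RtoC (ap i)))))))
    (cinfprod (fun i => Cmult (Cexp (Copp (Cmult z (RtoC (am i)))))
                              (Cplus 1 (Cmult z (RtoC (am i)))))).

(* Finite product over {i : a i > t} of f i (finitely many such i when
   a -> 0), written as the (eventually constant) limit of partial products. *)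
Definition trunc_prod (a : nat -> R) (t : R) (f : nat -> C) : C :=
  cinfprod (fun i => if Rlt_dec t (a i) then f i else 1%C).

Definition trunc_sum (a : nat -> R) (t : R) : R :=
  Series (fun i => if Rlt_dec t (a i) then a i else 0).

Definition PVprod (ap am : nat -> R) (t : R) (z : C) : C :=
  Cmult (trunc_prod ap t (fun i => Cminus 1 (Cmult (RtoC (ap i)) z)))
        (trunc_prod am t (fun i => Cplus 1 (Cmult (RtoC (am i)) z))).

(* For t > 0 only finitely many a_i exceed t, and
     prod_{a_i > t} (1 - a_i z) = prod_{a_i > t} e^{z a_i} (1 - z a_i) * e^{- z sum_{a_i > t} a_i}.
   Since |e^w (1 - w) - 1| = O(|w|^2) and sum_i a_i^2 < oo, the compensated products
   prod_{a_i > t} e^{z a_i} (1 - z a_i) converge, as t -> 0, to the infinite products in E_omega(z).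
   So at t = R^{-2} the principal-value product is the compensated product for alpha^+ at z, times
   that for alpha^- at -z, times e^{- z S(R)}, where S(R) is the difference of the truncated sums;
   sufficiency follows at once.  For necessity take z = x > 0 small: all the compensated products
   are then bounded away from 0, and taking logarithms of moduli gives
   x S(R) -> g1 x + g2 x^2 / 2; comparing two values of x forces g2 = 0 and S(R) -> g1. *)

From Stdlib Require Import Reals Lra Psatz Lia ClassicalEpsilon FunctionalExtensionality.
From Coquelicot Require Import Coquelicot.
Open Scope R_scope.

Lemma exp_sub1_sub_le x : Rabs x <= 1/2 -> Rabs (exp x - 1 - x) <= 2 * x ^ 2.
Proof.
  intros Hx. apply Rabs_le_between in Hx.
  pose proof (exp_ineq1_le x). pose proof (exp_ineq1_le (- x)).
  assert (Hinv : exp x * exp (- x) = 1) by (rewrite <- exp_plus, Rplus_opp_r; apply exp_0).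
  assert (exp x * (1 - x) <= 1)
    by (rewrite <- Hinv; apply Rmult_le_compat_l; [left; apply exp_pos | lra]).
  rewrite Rabs_right by lra. nra.
Qed.

Lemma exp_sub1_le x : Rabs x <= 1/2 -> Rabs (exp x - 1) <= 2 * Rabs x.
Proof.
  intros Hx. pose proof (exp_sub1_sub_le x Hx). rewrite <- (pow2_abs x) in H.
  replace (exp x - 1) with ((exp x - 1 - x) + x) by ring.
  eapply Rle_trans; [apply Rabs_triang |]. pose proof (Rabs_pos x). nra.
Qed.

Lemma exp_le_compat x y : x <= y -> exp x <= exp y.
Proof.
  intros Hxy. destruct (Rle_lt_or_eq_dec _ _ Hxy) as [Hlt | ->];
    [left; apply exp_increasing, Hlt | right; reflexivity].
Qed.

Lemma cos_sub1_le y : Rabs y <= 1 -> Rabs (cos y - 1) <= y ^ 2 / 2.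
Proof.
  intros Hy. apply Rabs_le_between in Hy. pose proof PI2_1.
  destruct (cos_bound y 0 ltac:(lra) ltac:(lra)) as [Hlow _].
  unfold cos_approx, cos_term in Hlow. simpl in Hlow.
  pose proof (COS_bound y). rewrite Rabs_left1; lra.
Qed.

Lemma sin_sub_le y : Rabs y <= 1 -> Rabs (sin y - y) <= y ^ 2.
Proof.
  assert (Hpos : forall u, 0 <= u <= 1 -> Rabs (sin u - u) <= u ^ 2).
  { intros u Hu. pose proof PI2_1.
    destruct (sin_bound u 0 ltac:(lra) ltac:(lra)) as [Hlow Hup].
    replace (sin_approx u (2 * 0 + 1)) with (u - u ^ 3 / 6) in Hlow
      by (unfold sin_approx, sin_term; simpl; field).
    replace (sin_approx u (2 * (0 + 1))) with (u - u ^ 3 / 6 + u ^ 5 / 120) in Hup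
      by (unfold sin_approx, sin_term; simpl; field).
    assert (u ^ 3 <= u ^ 2)
      by (replace (u ^ 3) with (u ^ 2 * u) by ring; assert (0 <= u ^ 2) by nra; nra).
    assert (u ^ 5 <= u ^ 3)
      by (replace (u ^ 5) with (u ^ 3 * (u * u)) by ring;
          assert (0 <= u ^ 3) by (apply pow_le; lra); nra).
    apply Rabs_le. split; nra. }
  intros Hy. destruct (Rle_or_lt 0 y) as [Hy0 | Hy0].
  - apply Hpos. apply Rabs_le_between in Hy. lra.
  - replace (sin y - y) with (- (sin (- y) - - y)) by (rewrite sin_neg; ring).
    rewrite Rabs_Ropp. replace (y ^ 2) with ((- y) ^ 2) by ring.
    apply Hpos. apply Rabs_le_between in Hy. lra.
Qed.

Open Scope C_scope.

Lemma Cexp_add (a b : C) : Cexp (a + b) = Cexp a * Cexp b.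
Proof.
  destruct a as [a1 a2], b as [b1 b2]. unfold Cexp, Cmult, Cplus; simpl.
  rewrite exp_plus, cos_plus, sin_plus. f_equal; ring.
Qed.

Lemma Cexp_0 : Cexp 0 = 1.
Proof. unfold Cexp, RtoC; simpl. rewrite exp_0, cos_0, sin_0. f_equal; ring. Qed.

Lemma Cmod_Cexp (w : C) : Cmod (Cexp w) = exp (Re w).
Proof.
  destruct w as [x y]. unfold Cexp, Cmod, Re, Im; simpl.
  replace ((exp x * cos y) * ((exp x * cos y) * 1) + (exp x * sin y) * ((exp x * sin y) * 1))%R
    with (exp x ^ 2)%R
    by (transitivity (exp x ^ 2 * (Rsqr (sin y) + Rsqr (cos y)))%R;
        [rewrite sin2_cos2; ring | unfold Rsqr; ring]).
  apply sqrt_pow2. left; apply exp_pos.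
Qed.

Lemma Cmod_le_Re_Im (c : C) : (Cmod c <= Rabs (Re c) + Rabs (Im c))%R.
Proof.
  pose proof (Cmod2_alt c). pose proof (Cmod_ge_0 c).
  pose proof (Rabs_pos (Re c)). pose proof (Rabs_pos (Im c)).
  rewrite <- (pow2_abs (Re c)), <- (pow2_abs (Im c)) in H. nra.
Qed.

Lemma Cexp_sub1_sub_le (w : C) : (Cmod w <= 1/2 -> Cmod (Cexp w - 1 - w) <= 4 * Cmod w ^ 2)%R.
Proof.
  intros Hw. rewrite Cmod2_alt. destruct w as [x y].
  pose proof (Rmax_Cmod (x, y)) as Hxy; simpl in Hxy.
  pose proof (Rmax_l (Rabs x) (Rabs y)). pose proof (Rmax_r (Rabs x) (Rabs y)).
  eapply Rle_trans; [apply Cmod_le_Re_Im |].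
  unfold Cexp, Cminus, Cplus, Copp, RtoC, Re, Im; simpl.
  pose proof (exp_sub1_sub_le x ltac:(lra)) as Ex.
  pose proof (exp_sub1_le x ltac:(lra)) as Hexp1.
  pose proof (cos_sub1_le y ltac:(lra)) as Ec.
  pose proof (sin_sub_le y ltac:(lra)) as Es.
  rewrite <- (pow2_abs x) in Ex. rewrite <- (pow2_abs y) in Ec, Es.
  pose proof (Rabs_pos x). pose proof (Rabs_pos y). pose proof (exp_pos x).
  assert (Hexp : (exp x <= 2)%R) by (apply Rabs_le_between in Hexp1; lra).
  assert (Hsin : (Rabs (sin y) <= 2 * Rabs y)%R).
  { replace (sin y) with ((sin y - y) + y)%R by ring.
    eapply Rle_trans; [apply Rabs_triang |]. nra. }
  assert (Hre : (Rabs (exp x * cos y + - (1) + - x) <= 2 * Rabs x ^ 2 + Rabs y ^ 2)%R).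
  { replace (exp x * cos y + - (1) + - x)%R with ((exp x - 1 - x) + exp x * (cos y - 1))%R
      by ring.
    eapply Rle_trans; [apply Rabs_triang |].
    rewrite Rabs_mult, (Rabs_right (exp x)) by lra.
    assert (exp x * Rabs (cos y - 1) <= 2 * (Rabs y ^ 2 / 2))%R
      by (apply Rmult_le_compat; try apply Rabs_pos; lra).
    lra. }
  assert (Him : (Rabs (exp x * sin y + - 0 + - y) <= 4 * Rabs x * Rabs y + Rabs y ^ 2)%R).
  { replace (exp x * sin y + - 0 + - y)%R with ((exp x - 1) * sin y + (sin y - y))%R by ring.
    eapply Rle_trans; [apply Rabs_triang |]. rewrite Rabs_mult.
    assert (Rabs (exp x - 1) * Rabs (sin y) <= (2 * Rabs x) * (2 * Rabs y))%R
      by (apply Rmult_le_compat; auto using Rabs_pos).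
    lra. }
  replace (x * (x * 1) + y * (y * 1))%R with (Rabs x ^ 2 + Rabs y ^ 2)%R
    by (rewrite !pow2_abs; ring).
  pose proof (pow2_ge_0 (Rabs x - Rabs y)). nra.
Qed.

(* Weierstrass primary factor of genus one: [Eomega] multiplies the [wfactor (z * ap i)] and the
   [wfactor (- z * am i)]. *)
Definition wfactor (w : C) : C := Cexp w * (1 - w).

Lemma wfactor_0 : wfactor 0 = 1.
Proof. unfold wfactor. rewrite Cexp_0. ring. Qed.

Lemma wfactor_sub1_le_sq (r : R) :
  exists K, forall w, (Cmod w <= r -> Cmod (wfactor w - 1) <= K * Cmod w ^ 2)%R.
Proof.
  set (M := (exp r * (1 + r) + 1)%R).
  exists (Rmax 7 (4 * M)). intros w Hr.
  pose proof (Rmax_l 7 (4 * M)). pose proof (Rmax_r 7 (4 * M)).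
  pose proof (Cmod_ge_0 w). pose proof (pow2_ge_0 (Cmod w)).
  destruct (Rle_or_lt (Cmod w) (1/2)) as [Hs | Hl].
  - pose proof (Cexp_sub1_sub_le w Hs) as Hq.
    assert (He : (Cmod (Cexp w - 1) <= 3 * Cmod w)%R).
    { replace (Cexp w - 1) with ((Cexp w - 1 - w) + w) by ring.
      eapply Rle_trans; [apply Cmod_triangle |]. nra. }
    replace (wfactor w - 1) with ((Cexp w - 1 - w) + - (w * (Cexp w - 1)))
      by (unfold wfactor; ring).
    eapply Rle_trans; [apply Cmod_triangle |]. rewrite Cmod_opp, Cmod_mult.
    assert (Cmod w * Cmod (Cexp w - 1) <= Cmod w * (3 * Cmod w))%R
      by (apply Rmult_le_compat_l; lra).
    assert (7 * Cmod w ^ 2 <= Rmax 7 (4 * M) * Cmod w ^ 2)%R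
      by (apply Rmult_le_compat_r; lra).
    nra.
  - assert (HM : (Cmod (wfactor w - 1) <= M)%R).
    { unfold wfactor, M, Cminus. eapply Rle_trans; [apply Cmod_triangle |].
      rewrite Cmod_opp, Cmod_1, Cmod_mult, Cmod_Cexp.
      apply Rplus_le_compat_r, Rmult_le_compat.
      - left; apply exp_pos.
      - apply Cmod_ge_0.
      - apply exp_le_compat.
        pose proof (re_le_Cmod w) as Hre. apply Rabs_le_between in Hre. lra.
      - eapply Rle_trans; [apply Cmod_triangle |]. rewrite Cmod_opp, Cmod_1. lra. }
    assert (0 <= M)%R by (unfold M; pose proof (exp_pos r); nra).
    assert (4 * M * Cmod w ^ 2 <= Rmax 7 (4 * M) * Cmod w ^ 2)%R
      by (apply Rmult_le_compat_r; lra).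
    assert (M * 1 <= M * (4 * Cmod w ^ 2))%R by (apply Rmult_le_compat_l; nra).
    lra.
Qed.

Lemma wfactor_real_ge (y : R) : (y <= 1 -> 1 - y ^ 2 <= Cmod (wfactor y))%R.
Proof.
  intros Hy. unfold wfactor. rewrite Cmod_mult, Cmod_Cexp, <- RtoC_minus, Cmod_R.
  rewrite Rabs_right by lra. simpl Re. pose proof (exp_ineq1_le y). nra.
Qed.

Fixpoint psum (a : nat -> R) (n : nat) : R :=
  match n with O => 0%R | S m => (psum a m + a m)%R end.

Lemma psum_ge0 (c : nat -> R) n : (forall i, 0 <= c i)%R -> (0 <= psum c n)%R.
Proof. intros Hc; induction n; simpl; [lra | pose proof (Hc n); lra]. Qed.

Lemma sum_n_psum (c : nat -> R) n : sum_n c n = psum c (S n).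
Proof.
  induction n; simpl in *; [rewrite sum_O; ring | rewrite sum_Sn, IHn; reflexivity].
Qed.

Lemma psum_le_Series (c : nat -> R) n :
  (forall i, 0 <= c i)%R -> ex_series c -> (psum c n <= Series c)%R.
Proof.
  intros Hc Hs.
  assert (Hpartial : forall m, (sum_n c m <= Series c)%R).
  { apply is_lim_seq_incr_compare; [apply Series_correct, Hs |].
    intros m. rewrite !sum_n_psum. simpl. pose proof (Hc (S m)). lra. }
  destruct n as [| n]; [| rewrite <- sum_n_psum; apply Hpartial].
  pose proof (Hpartial 0%nat) as H0. rewrite sum_n_psum in H0. simpl in *.
  pose proof (Hc 0%nat). lra.
Qed.

Lemma psum_ext_lt (c d : nat -> R) N :
  (forall i, (i < N)%nat -> c i = d i) -> psum c N = psum d N.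
Proof.
  intros Hcd. induction N; simpl; [reflexivity |].
  rewrite (Hcd N), IHN by auto with arith; reflexivity.
Qed.

Lemma is_series_finite_support (h : nat -> R) N :
  (forall i, (N <= i)%nat -> h i = 0%R) -> is_series h (psum h N).
Proof.
  intros Hh. apply (filterlim_ext_loc (fun _ => psum h N)); [| apply filterlim_const].
  exists N. intros n Hn. rewrite sum_n_psum.
  induction Hn; simpl; [rewrite Hh by lia; ring |].
  simpl in IHHn. rewrite <- IHHn, (Hh (S m)) by lia. ring.
Qed.

Lemma filterlim_C_iff {T} (F : (T -> Prop) -> Prop) {FF : Filter F} (f : T -> C) (l : C) :
  filterlim f F (locally l) <-> forall eps : posreal, F (fun x => (Cmod (f x - l) < eps)%R).
Proof. exact (@filterlim_locally_ball_norm C_AbsRing T C_NormedModule F FF f l). Qed.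

Lemma Cmod_cprod_le_exp (g : nat -> C) (c : nat -> R) :
  (forall i, Cmod (g i - 1) <= c i)%R -> forall n, (Cmod (cprod g n) <= exp (psum c n))%R.
Proof.
  intros Hg n. induction n; simpl.
  - rewrite Cmod_1, exp_0. lra.
  - rewrite Cmod_mult, exp_plus.
    assert (Hgn : (Cmod (g n) <= exp (c n))%R).
    { eapply Rle_trans; [| apply exp_ineq1_le].
      replace (g n) with ((g n - 1) + 1) by ring.
      eapply Rle_trans; [apply Cmod_triangle |]. rewrite Cmod_1. specialize (Hg n). lra. }
    apply Rmult_le_compat; auto; apply Cmod_ge_0.
Qed.

Lemma cprod_cvg (g : nat -> C) (c : nat -> R) :
  (forall i, Cmod (g i - 1) <= c i)%R -> ex_series c ->
  exists P, filterlim (cprod g) eventually (locally P).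
Proof.
  intros Hg Hc.
  assert (Hc0 : forall i, (0 <= c i)%R)
    by (intros i; eapply Rle_trans; [apply Cmod_ge_0 | apply Hg]).
  set (d n := cprod g (S n) - cprod g n).
  assert (Htel : forall n, sum_n d n = cprod g (S n) - 1).
  { induction n; [rewrite sum_O | rewrite sum_Sn, IHn]; unfold d; simpl; [ring |].
    change plus with Cplus. ring. }
  assert (Hd : forall n, (norm (d n) <= scal (exp (Series c)) (c n))%R).
  { intros n. change (Cmod (cprod g (S n) - cprod g n) <= exp (Series c) * c n)%R.
    replace (cprod g (S n) - cprod g n) with (cprod g n * (g n - 1)) by (simpl; ring).
    rewrite Cmod_mult. apply Rmult_le_compat; auto using Cmod_ge_0.
    eapply Rle_trans; [apply (Cmod_cprod_le_exp g c Hg) |].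
    apply exp_le_compat, psum_le_Series; assumption. }
  destruct (@ex_series_le C_AbsRing C_CompleteNormedModule d _ Hd
              (@ex_series_scal_l R_AbsRing R_NormedModule _ _ Hc)) as [l Hl].
  exists (1 + l). apply (proj2 (filterlim_C_iff eventually (cprod g) (1 + l))). intros eps.
  destruct (proj1 (filterlim_C_iff eventually (sum_n d) l) Hl eps) as [N HN].
  exists (S N). intros [| n] Hn; [lia |].
  replace (cprod g (S n) - (1 + l)) with (sum_n d n - l) by (rewrite Htel; ring).
  apply HN. lia.
Qed.

Lemma Cmod_cprod_ge (g : nat -> C) (u : nat -> R) :
  (forall i, 0 <= u i <= 1)%R -> (forall i, 1 - u i <= Cmod (g i))%R ->
  forall n, (1 - psum u n <= Cmod (cprod g n))%R.
Proof.
  intros Hu Hg n. induction n; simpl; [rewrite Cmod_1; lra |].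
  rewrite Cmod_mult. pose proof (Hu n). pose proof (Hg n).
  pose proof (Cmod_ge_0 (cprod g n)).
  pose proof (psum_ge0 u n (fun i => proj1 (Hu i))).
  destruct (Rle_or_lt 0 (1 - psum u n)).
  - assert ((1 - psum u n) * (1 - u n) <= Cmod (cprod g n) * Cmod (g n))%R
      by (apply Rmult_le_compat; lra).
    nra.
  - pose proof (Cmod_ge_0 (g n)). nra.
Qed.

Lemma cprod_eventually_const (g : nat -> C) N :
  (forall n, (N <= n)%nat -> g n = 1) -> forall n, (N <= n)%nat -> cprod g n = cprod g N.
Proof.
  intros Hg n Hn. induction Hn; [reflexivity |].
  simpl. rewrite IHHn, Hg by lia. ring.
Qed.

Lemma cprod_ext_lt (g h : nat -> C) N :
  (forall i, (i < N)%nat -> g i = h i) -> cprod g N = cprod h N.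
Proof.
  intros Hgh. induction N; simpl; [reflexivity |].
  rewrite (Hgh N), IHN by auto with arith; reflexivity.
Qed.

Lemma cprod_wfactor (b : nat -> R) (z : C) N :
  cprod (fun i => wfactor (z * b i)) N = cprod (fun i => 1 - b i * z) N * Cexp (z * psum b N).
Proof.
  induction N; simpl.
  - replace (z * 0) with (RtoC 0) by ring. rewrite Cexp_0. ring.
  - rewrite IHN, RtoC_plus.
    replace (z * (psum b N + b N)) with (z * psum b N + z * b N) by ring.
    rewrite Cexp_add. unfold wfactor. ring.
Qed.

Lemma cinfprod_eq (g : nat -> C) (P : C) :
  filterlim (cprod g) eventually (locally P) -> cinfprod g = P.
Proof.
  intros HP. unfold cinfprod, limC.
  set (F := filtermap (cprod g) eventually).
  assert (FF : ProperFilter F) by apply filtermap_proper_filter, eventually_filter.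
  assert (Hlim : forall eps : posreal, F (ball (@lim C_CompleteNormedModule F) eps)).
  { apply complete_cauchy; auto. intros eps. exists P. exact (HP _ (locally_ball P eps)). }
  apply (@filterlim_locally_unique _ C_AbsRing C_NormedModule F
           (Proper_StrongProper _ FF) (fun x => x)).
  - apply filterlim_locally. exact Hlim.
  - exact HP.
Qed.

Lemma Cmod_lim_ge {T} (F : (T -> Prop) -> Prop) {FF : ProperFilter F} (f : T -> C) l c :
  (forall x, c <= Cmod (f x))%R -> filterlim f F (locally l) -> (c <= Cmod l)%R.
Proof.
  intros Hc Hl. apply Rnot_lt_le. intros Hlt.
  assert (Heps : (0 < c - Cmod l)%R) by lra.
  destruct (filter_ex _ (proj1 (filterlim_C_iff F f l) Hl (mkposreal _ Heps))) as [x Hx].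
  simpl in Hx. specialize (Hc x).
  replace (f x) with ((f x - l) + l) in Hc by ring.
  pose proof (Cmod_triangle (f x - l) l). lra.
Qed.

(* [filterlim_mult] is stated for the [AbsRing] uniform structure of [C]; [locally_C] bridges it
   to the product structure used by [locally]. *)
Lemma filterlim_Cmult {T} (F : (T -> Prop) -> Prop) {FF : Filter F} (f g : T -> C) (a b : C) :
  filterlim f F (locally a) -> filterlim g F (locally b) ->
  filterlim (fun x => f x * g x) F (locally (a * b)).
Proof.
  intros Hf Hg P HP.
  apply (filterlim_comp_2 (G := @locally (AbsRing_UniformSpace C_AbsRing) a)
           (H := @locally (AbsRing_UniformSpace C_AbsRing) b)
           (I := @locally (AbsRing_UniformSpace C_AbsRing) (a * b)) f g Cmult).
  - intros Q HQ. apply Hf, locally_C, HQ.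
  - intros Q HQ. apply Hg, locally_C, HQ.
  - apply (@filterlim_mult C_AbsRing a b).
  - apply locally_C, HP.
Qed.

Lemma filterlim_ln_Cmod {T} (F : (T -> Prop) -> Prop) {FF : Filter F} (f : T -> C) l :
  (0 < Cmod l)%R -> filterlim f F (locally l) ->
  filterlim (fun x => ln (Cmod (f x))) F (locally (ln (Cmod l))).
Proof.
  intros Hl Hf. eapply filterlim_comp; [eapply filterlim_comp; [exact Hf |] |].
  - exact (@filterlim_norm C_AbsRing C_NormedModule l).
  - apply continuous_ln. exact Hl.
Qed.

Lemma filterlim_Cexp_scal (z : C) (s0 : R) :
  filterlim (fun s : R => Cexp (z * s)) (locally s0) (locally (Cexp (z * s0))).
Proof.
  unfold Cexp. intros P [eps HP].
  assert (Hcomp : forall h : R -> R, (forall s, ex_derive h s) ->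
            locally s0 (fun s => ball (h s0) eps (h s))).
  { intros h Hh. apply (ex_derive_continuous h s0 (Hh s0)). apply locally_ball. }
  eapply filter_imp; [intros s Hs; apply HP; exact Hs |].
  apply filter_and; apply Hcomp; intros s; simpl; auto_derive; auto.
Qed.

Lemma filterlim_inv_sq_at_right_0 :
  filterlim (fun x => / x ^ 2)%R (Rbar_locally p_infty) (at_right 0).
Proof.
  intros P [eps HP]. exists (1 + / eps)%R. intros x Hx.
  pose proof (cond_pos eps). pose proof (Rinv_0_lt_compat eps H).
  assert (Hx2 : (/ eps < x ^ 2)%R) by nra.
  assert (Hpos : (0 < / x ^ 2)%R) by (apply Rinv_0_lt_compat; nra).
  apply HP; [| exact Hpos].
  apply (norm_compat1 0%R (/ x ^ 2)%R eps). change (Rabs (/ x ^ 2 - 0) < eps)%R.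
  rewrite Rminus_0_r, Rabs_right by lra.
  rewrite <- (Rinv_inv eps). apply Rinv_lt_contravar; nra.
Qed.

Lemma eventually_inv_sq_pos : Rbar_locally p_infty (fun Rr => 0 < / Rr ^ 2)%R.
Proof. exists 0%R. intros Rr HRr. apply Rinv_0_lt_compat, pow_lt, HRr. Qed.

Lemma exists_pos_lower_bound (a : nat -> R) n :
  exists t0, (0 < t0)%R /\ forall i, (i < n)%nat -> (0 < a i)%R -> (t0 <= a i)%R.
Proof.
  induction n as [| n [t0 [Ht0 Hlow]]]; [exists 1%R; split; [lra | intros; lia] |].
  destruct (Rlt_or_le 0 (a n)) as [Hn | Hn].
  - exists (Rmin t0 (a n)). split; [apply Rmin_pos; lra |].
    intros i Hi Hai. destruct (Nat.eq_dec i n) as [-> | Hne]; [apply Rmin_r |].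
    eapply Rle_trans; [apply Rmin_l | apply Hlow; auto; lia].
  - exists t0. split; auto. intros i Hi Hai.
    destruct (Nat.eq_dec i n) as [-> | Hne]; [lra | apply Hlow; auto; lia].
Qed.

Section NullSequence.

Variable a : nat -> R.
Hypothesis a_ge0 : forall i, (0 <= a i)%R.
Hypothesis a_nonincr : forall i, (a (S i) <= a i)%R.
Hypothesis a_sq_summable : ex_series (fun i => a i ^ 2)%R.

Lemma a_antitone i j : (i <= j)%nat -> (a j <= a i)%R.
Proof. intros Hij. induction Hij; [lra | specialize (a_nonincr m); lra]. Qed.

Lemma a_eventually_le t : (0 < t)%R -> exists m, (a m <= t)%R.
Proof.
  intros Ht. pose proof (ex_series_lim_0 _ a_sq_summable) as H0.
  apply is_lim_seq_spec in H0.
  destruct (H0 (mkposreal (t * t) ltac:(simpl; nra))) as [m Hm]. exists m.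
  specialize (Hm m (le_n m)). simpl in Hm. rewrite Rminus_0_r, Rabs_right in Hm by nra.
  pose proof (a_ge0 m). nra.
Qed.

(* Junk value unless [a] is nonincreasing and eventually [<= t]. *)
Definition count_gt (t : R) : nat :=
  epsilon (inhabits 0%nat) (fun N => forall i, (t < a i)%R <-> (i < N)%nat).

Lemma count_gt_spec t : (0 < t)%R -> forall i, (t < a i)%R <-> (i < count_gt t)%nat.
Proof.
  intros Ht. unfold count_gt. apply epsilon_spec.
  destruct (a_eventually_le t Ht) as [m Hm]. clear Ht.
  induction m as [| m IH].
  - exists 0%nat. intros i. split; [| lia]. pose proof (a_antitone 0 i ltac:(lia)). lra.
  - destruct (Rlt_or_le t (a m)) as [Hlt | Hle]; [| exact (IH Hle)].
    exists (S m). intros i. split; intros Hi.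
    + destruct (Nat.lt_ge_cases i (S m)) as [Hmi | Hmi]; [exact Hmi |].
      pose proof (a_antitone _ _ Hmi). lra.
    + pose proof (a_antitone i m ltac:(lia)). lra.
Qed.

Lemma trunc_prod_count_gt t (f : nat -> C) :
  (0 < t)%R -> trunc_prod a t f = cprod f (count_gt t).
Proof.
  intros Ht. pose proof (count_gt_spec t Ht) as HN.
  unfold trunc_prod. apply cinfprod_eq.
  apply (filterlim_ext_loc (fun _ => cprod f (count_gt t))); [| apply filterlim_const].
  exists (count_gt t). intros n Hn. symmetry.
  rewrite (cprod_eventually_const _ (count_gt t)); auto.
  - apply cprod_ext_lt. intros i Hi. apply HN in Hi. destruct (Rlt_dec t (a i)); tauto.
  - intros i Hi. destruct (Rlt_dec t (a i)) as [Hlt | _]; auto. apply HN in Hlt. lia.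
Qed.

Lemma trunc_sum_count_gt t : (0 < t)%R -> trunc_sum a t = psum a (count_gt t).
Proof.
  intros Ht. pose proof (count_gt_spec t Ht) as HN.
  unfold trunc_sum. apply is_series_unique.
  erewrite psum_ext_lt; [apply is_series_finite_support |].
  - intros i Hi. simpl. destruct (Rlt_dec t (a i)) as [Hlt | _]; auto. apply HN in Hlt. lia.
  - intros i Hi. apply HN in Hi. simpl. destruct (Rlt_dec t (a i)); tauto.
Qed.

Lemma cprod_count_gt_cvg (g : nat -> C) (P : C) :
  (forall n, a n = 0%R -> g n = 1) -> filterlim (cprod g) eventually (locally P) ->
  filterlim (fun t => cprod g (count_gt t)) (at_right 0) (locally P).
Proof.
  intros Hg HP. apply (proj2 (filterlim_C_iff _ _ _)). intros eps.
  destruct (proj1 (filterlim_C_iff _ _ _) HP eps) as [n0 Hn0].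
  (* For [t] below [t0], either [n0 <= count_gt t], or [a] vanishes from [count_gt t] on and the
     partial products are constant from there. *)
  destruct (exists_pos_lower_bound a n0) as [t0 [Ht0 Hlow]].
  exists (mkposreal t0 Ht0). intros t Hball Ht.
  assert (Htt0 : (t < t0)%R) by (apply Rabs_lt_between' in Hball; simpl in Hball; lra).
  pose proof (count_gt_spec t Ht) as HN.
  destruct (Nat.le_gt_cases n0 (count_gt t)) as [Hge | Hlt]; [apply Hn0; exact Hge |].
  assert (HaN : a (count_gt t) = 0%R).
  { assert (Hle : (a (count_gt t) <= t)%R)
      by (apply Rnot_lt_le; intros Hgt; apply HN in Hgt; lia).
    destruct (Rle_lt_or_eq_dec _ _ (a_ge0 (count_gt t))) as [Hpos | Hz]; auto.
    pose proof (Hlow _ Hlt Hpos). lra. }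
  rewrite <- (cprod_eventually_const g (count_gt t)) with (n := n0); [apply Hn0 | | ]; auto.
  - intros n Hn. apply Hg. pose proof (a_antitone _ _ Hn). pose proof (a_ge0 n). lra.
  - lia.
Qed.

Definition wprod (z : C) : C := cinfprod (fun i => wfactor (z * a i)).

Definition trunc_wprod (t : R) (z : C) : C := trunc_prod a t (fun i => wfactor (z * a i)).

Lemma wprod_cvg (z : C) :
  filterlim (cprod (fun i => wfactor (z * a i))) eventually (locally (wprod z)).
Proof.
  destruct (wfactor_sub1_le_sq (Cmod z * a 0%nat)) as [K HK].
  destruct (cprod_cvg (fun i => wfactor (z * a i)) (fun i => K * Cmod z ^ 2 * a i ^ 2)%R)
    as [P HP].
  - intros i. assert (Hzi : Cmod (z * a i) = (Cmod z * a i)%R)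
      by (rewrite Cmod_mult, Cmod_R, Rabs_right; auto with real).
    eapply Rle_trans; [apply HK |]; rewrite Hzi.
    + apply Rmult_le_compat_l; [apply Cmod_ge_0 | apply a_antitone; lia].
    + right; ring.
  - exact (@ex_series_scal_l R_AbsRing R_NormedModule _ _ a_sq_summable).
  - unfold wprod. rewrite (cinfprod_eq _ _ HP). exact HP.
Qed.

Lemma trunc_wprod_cvg (z : C) :
  filterlim (fun t => trunc_wprod t z) (at_right 0) (locally (wprod z)).
Proof.
  apply (filterlim_ext_loc (fun t => cprod (fun i => wfactor (z * a i)) (count_gt t))).
  - exists (mkposreal 1 Rlt_0_1). intros t _ Ht. symmetry. apply trunc_prod_count_gt, Ht.
  - apply cprod_count_gt_cvg; [| apply wprod_cvg].
    intros n Hn. rewrite Hn. replace (z * 0) with (RtoC 0) by ring. apply wfactor_0.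
Qed.

Lemma trunc_wprod_cvg_pinfty (z : C) :
  filterlim (fun Rr => trunc_wprod (/ Rr ^ 2) z) (Rbar_locally p_infty) (locally (wprod z)).
Proof.
  apply (filterlim_comp _ _ _ (fun Rr => / Rr ^ 2)%R (fun t => trunc_wprod t z) _ (at_right 0)).
  - apply filterlim_inv_sq_at_right_0.
  - apply trunc_wprod_cvg.
Qed.

Lemma trunc_wprod_eq (t : R) (z : C) :
  (0 < t)%R ->
  trunc_wprod t z = trunc_prod a t (fun i => 1 - a i * z) * Cexp (z * trunc_sum a t).
Proof.
  intros Ht. unfold trunc_wprod.
  rewrite !trunc_prod_count_gt, trunc_sum_count_gt by exact Ht. apply cprod_wfactor.
Qed.

(* Small enough that [|y a_i| <= 1/2] and [y^2 sum_i a_i^2 <= 1/2] when [|y| <= real_radius]. *)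
Definition real_radius : R := (/ (2 * (1 + a 0%nat + Series (fun i => a i ^ 2))))%R.

Lemma real_radius_pos : (0 < real_radius)%R.
Proof.
  pose proof (psum_le_Series _ 0 (fun i => pow2_ge_0 (a i)) a_sq_summable).
  pose proof (a_ge0 0%nat). apply Rinv_0_lt_compat. simpl in *. lra.
Qed.

Lemma cprod_wfactor_real_ge (y : R) :
  (Rabs y <= real_radius)%R ->
  forall n, (1/2 <= Cmod (cprod (fun i => wfactor (y * a i)) n))%R.
Proof.
  intros Hy n.
  set (A := Series (fun i => a i ^ 2)%R).
  assert (HA : (0 <= A)%R)
    by exact (psum_le_Series _ 0 (fun i => pow2_ge_0 (a i)) a_sq_summable).
  pose proof (a_ge0 0%nat). pose proof (Rabs_pos y). pose proof real_radius_pos.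
  assert (Hr : (real_radius * (1 + a 0%nat + A) = 1/2)%R)
    by (unfold real_radius; fold A; field; lra).
  set (u i := (y ^ 2 * a i ^ 2)%R).
  assert (Hyai : forall i, (Rabs (y * a i) <= 1/2)%R).
  { intros i. rewrite Rabs_mult, (Rabs_right (a i)) by (apply Rle_ge, a_ge0).
    pose proof (a_antitone 0 i ltac:(lia)). pose proof (a_ge0 i).
    assert (Rabs y * a i <= real_radius * a 0%nat)%R by (apply Rmult_le_compat; lra). nra. }
  assert (Hu : forall i, (0 <= u i <= 1)%R).
  { intros i. specialize (Hyai i). apply Rabs_le_between in Hyai.
    unfold u. replace (y ^ 2 * a i ^ 2)%R with ((y * a i) ^ 2)%R by ring. nra. }
  assert (Hsum : (psum u n <= 1/2)%R).
  { eapply Rle_trans; [apply psum_le_Series; [apply Hu |] |].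
    - exact (@ex_series_scal_l R_AbsRing R_NormedModule _ _ a_sq_summable).
    - unfold u. rewrite Series_scal_l. fold A.
      assert (Hy2 : (y ^ 2 <= real_radius * real_radius)%R)
        by (rewrite <- (pow2_abs y); simpl; nra).
      assert (real_radius * A <= 1/2)%R by nra. nra. }
  eapply Rle_trans; [| apply (Cmod_cprod_ge _ u Hu)]; [lra |].
  intros i. rewrite <- RtoC_mult. unfold u.
  replace (y ^ 2 * a i ^ 2)%R with ((y * a i) ^ 2)%R by ring.
  apply wfactor_real_ge. specialize (Hyai i). apply Rabs_le_between in Hyai. lra.
Qed.

Lemma trunc_wprod_real_ge (y t : R) :
  (Rabs y <= real_radius -> 0 < t -> 1/2 <= Cmod (trunc_wprod t y))%R.
Proof.
  intros Hy Ht. unfold trunc_wprod. rewrite trunc_prod_count_gt by exact Ht.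
  apply cprod_wfactor_real_ge, Hy.
Qed.

Lemma wprod_real_ge (y : R) : (Rabs y <= real_radius -> 1/2 <= Cmod (wprod y))%R.
Proof.
  intros Hy. exact (Cmod_lim_ge eventually _ _ _ (cprod_wfactor_real_ge y Hy) (wprod_cvg y)).
Qed.

End NullSequence.

Definition drift (ap am : nat -> R) (t : R) : R := (trunc_sum ap t - trunc_sum am t)%R.

Lemma Eomega_eq (ap am : nat -> R) (g1 g2 : R) (z : C) :
  Eomega ap am g1 g2 z = Cexp (- (g1 * z) - (g2 / 2)%R * (z * z)) * wprod ap z * wprod am (- z).
Proof.
  unfold Eomega, wprod. do 2 f_equal. apply functional_extensionality. intros i.
  unfold wfactor. f_equal; [f_equal |]; ring.
Qed.

Lemma Cmod_Eomega_real (ap am : nat -> R) (g1 g2 x : R) :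
  Cmod (Eomega ap am g1 g2 x)
  = (exp (- (g1 * x + g2 * x ^ 2 / 2)) * Cmod (wprod ap x) * Cmod (wprod am (- x)))%R.
Proof.
  rewrite Eomega_eq, !Cmod_mult, Cmod_Cexp. do 3 f_equal. simpl. field.
Qed.

Section PrincipalValue.

Variables ap am : nat -> R.
Hypothesis ap_ge0 : forall i, (0 <= ap i)%R.
Hypothesis ap_nonincr : forall i, (ap (S i) <= ap i)%R.
Hypothesis ap_sq_summable : ex_series (fun i => ap i ^ 2)%R.
Hypothesis am_ge0 : forall i, (0 <= am i)%R.
Hypothesis am_nonincr : forall i, (am (S i) <= am i)%R.
Hypothesis am_sq_summable : ex_series (fun i => am i ^ 2)%R.

Lemma PVprod_eq (t : R) (z : C) :
  (0 < t)%R ->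
  PVprod ap am t z = trunc_wprod ap t z * trunc_wprod am t (- z) * Cexp (- z * drift ap am t).
Proof.
  intros Ht. unfold PVprod, drift.
  rewrite !trunc_wprod_eq by assumption.
  replace (fun i => 1 - am i * - z) with (fun i => 1 + am i * z)
    by (apply functional_extensionality; intros i; ring).
  set (Tp := trunc_prod ap t _). set (Tm := trunc_prod am t _).
  transitivity (Tp * Tm * Cexp (z * trunc_sum ap t + - z * trunc_sum am t
                                + - z * (trunc_sum ap t - trunc_sum am t)%R)).
  - rewrite RtoC_minus. replace (_ + _ + _) with (RtoC 0) by ring. rewrite Cexp_0. ring.
  - rewrite !Cexp_add. ring.
Qed.

Lemma drift_eq_ln_Cmod (t x : R) :
  (0 < t -> 0 < Cmod (trunc_wprod ap t x) -> 0 < Cmod (trunc_wprod am t (- x)) ->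
   x * drift ap am t = ln (Cmod (trunc_wprod ap t x)) + ln (Cmod (trunc_wprod am t (- x)))
                       - ln (Cmod (PVprod ap am t x)))%R.
Proof.
  intros Ht Hp Hm.
  rewrite PVprod_eq, !Cmod_mult, Cmod_Cexp by exact Ht.
  rewrite !ln_mult, ln_exp by (try apply Rmult_lt_0_compat; try apply exp_pos; lra).
  simpl. ring.
Qed.

Lemma PVprod_cvg_of_drift_cvg (g1 : R) :
  is_lim (fun Rr => drift ap am (/ Rr ^ 2)) p_infty g1 ->
  forall z, filterlim (fun Rr => PVprod ap am (/ Rr ^ 2) z)
              (Rbar_locally p_infty) (locally (Eomega ap am g1 0 z)).
Proof.
  intros Hdrift z.
  assert (HE : Eomega ap am g1 0 z = wprod ap z * wprod am (- z) * Cexp (- z * g1)).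
  { rewrite Eomega_eq. replace (0 / 2)%R with 0%R by field.
    replace (- (g1 * z) - 0 * (z * z)) with (- z * g1) by ring. ring. }
  rewrite HE.
  apply (filterlim_ext_loc (fun Rr => trunc_wprod ap (/ Rr ^ 2) z * trunc_wprod am (/ Rr ^ 2) (- z)
                                      * Cexp (- z * drift ap am (/ Rr ^ 2)))).
  - eapply filter_imp; [| exact eventually_inv_sq_pos]. intros Rr Ht. symmetry.
    apply PVprod_eq, Ht.
  - apply (filterlim_Cmult (Rbar_locally p_infty));
      [apply (filterlim_Cmult (Rbar_locally p_infty)); apply trunc_wprod_cvg_pinfty; assumption |].
    apply (filterlim_comp _ _ _ _ (fun s : R => Cexp (- z * s)) _ (locally g1));
      [exact Hdrift | apply filterlim_Cexp_scal].
Qed.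

Lemma drift_cvg_of_PVprod_cvg (g1 g2 : R) :
  (forall z, filterlim (fun Rr => PVprod ap am (/ Rr ^ 2) z)
               (Rbar_locally p_infty) (locally (Eomega ap am g1 g2 z))) ->
  exists delta, (0 < delta)%R /\ forall x, (0 < x <= delta)%R ->
    is_lim (fun Rr => drift ap am (/ Rr ^ 2)) p_infty (g1 + g2 * x / 2)%R.
Proof.
  intros HPV.
  exists (Rmin (real_radius ap) (real_radius am)).
  split; [apply Rmin_pos; apply real_radius_pos; assumption |]. intros x [Hx0 Hx].
  assert (Hxp : (Rabs x <= real_radius ap)%R)
    by (rewrite Rabs_right by lra; eapply Rle_trans; [exact Hx | apply Rmin_l]).
  assert (Hxm : (Rabs (- x) <= real_radius am)%R)
    by (rewrite Rabs_Ropp, Rabs_right by lra; eapply Rle_trans; [exact Hx | apply Rmin_r]).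
  pose proof (trunc_wprod_real_ge ap ap_ge0 ap_nonincr ap_sq_summable x) as HTp.
  pose proof (trunc_wprod_real_ge am am_ge0 am_nonincr am_sq_summable (- x)) as HTm.
  pose proof (wprod_real_ge ap ap_ge0 ap_nonincr ap_sq_summable x Hxp) as HWp.
  pose proof (wprod_real_ge am am_ge0 am_nonincr am_sq_summable (- x) Hxm) as HWm.
  rewrite RtoC_opp in HTm, HWm.
  assert (HE : (0 < Cmod (Eomega ap am g1 g2 x))%R).
  { rewrite Cmod_Eomega_real. repeat apply Rmult_lt_0_compat; try apply exp_pos; lra. }
  assert (HlnE : (g1 * x + g2 * x ^ 2 / 2 = ln (Cmod (wprod ap x)) + ln (Cmod (wprod am (- x)))
                                           - ln (Cmod (Eomega ap am g1 g2 x)))%R).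
  { pose proof (exp_pos (- (g1 * x + g2 * x ^ 2 / 2))).
    rewrite Cmod_Eomega_real, !ln_mult, ln_exp by (try apply Rmult_lt_0_compat; lra).
    ring. }
  assert (Hxd : is_lim (fun Rr => x * drift ap am (/ Rr ^ 2))%R p_infty
                       (g1 * x + g2 * x ^ 2 / 2)%R).
  { rewrite HlnE. eapply is_lim_ext_loc.
    - eapply filter_imp; [| exact eventually_inv_sq_pos]. intros Rr Ht. symmetry.
      apply drift_eq_ln_Cmod; [exact Ht | specialize (HTp _ Hxp Ht) | specialize (HTm _ Hxm Ht)];
        lra.
    - apply is_lim_minus'; [apply is_lim_plus' |];
        apply (filterlim_ln_Cmod (Rbar_locally p_infty)); try lra; auto;
        apply trunc_wprod_cvg_pinfty; assumption. }
  replace (g1 + g2 * x / 2)%R with (/ x * (g1 * x + g2 * x ^ 2 / 2))%R by (field; lra).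
  apply (is_lim_ext_loc (fun Rr => / x * (x * drift ap am (/ Rr ^ 2)))%R).
  - exists 0%R. intros Rr _. field. lra.
  - exact (is_lim_scal_l _ (/ x) _ _ Hxd).
Qed.

End PrincipalValue.

Close Scope C_scope.

Lemma ex_series_le_nonneg (c d : nat -> R) :
  (forall n, 0 <= c n <= d n) -> ex_series d -> ex_series c.
Proof.
  intros Hcd. apply (@ex_series_le R_AbsRing R_CompleteNormedModule).
  intros n. change (Rabs (c n) <= d n). specialize (Hcd n). rewrite Rabs_right; lra.
Qed.

Theorem proposition5p7 (ap am : nat -> R) (g1 g2 : R) :
  in_Omega ap am g1 g2 ->
  ((forall z : C,
      filterlim (fun Rr : R => PVprod ap am (/ (Rr ^ 2)) z)
        (Rbar_locally p_infty) (locally (Eomega ap am g1 g2 z)))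
   <->
   (is_lim (fun Rr : R => trunc_sum ap (/ (Rr ^ 2)) - trunc_sum am (/ (Rr ^ 2)))
      p_infty g1
    /\ g2 = 0)).
Proof.
  intros [ap_ge0 [ap_nonincr [am_ge0 [am_nonincr [Hsq _]]]]].
  assert (Hsq_ge : forall n, 0 <= ap n ^ 2 /\ 0 <= am n ^ 2)
    by (intros n; split; apply pow2_ge_0).
  assert (ap_sq : ex_series (fun i => ap i ^ 2)).
  { refine (ex_series_le_nonneg _ _ _ Hsq). intros n. specialize (Hsq_ge n). lra. }
  assert (am_sq : ex_series (fun i => am i ^ 2)).
  { refine (ex_series_le_nonneg _ _ _ Hsq). intros n. specialize (Hsq_ge n). lra. }
  split.
  - intros HPV.
    destruct (drift_cvg_of_PVprod_cvg ap am ap_ge0 ap_nonincr ap_sq am_ge0 am_nonincr am_sq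
                g1 g2 HPV) as [delta [Hdelta Hdrift]].
    pose proof (is_lim_unique _ _ _ (Hdrift delta ltac:(lra))) as L1.
    pose proof (is_lim_unique _ _ _ (Hdrift (delta / 2) ltac:(lra))) as L2.
    rewrite L1 in L2. injection L2 as Hslope.
    assert (Hg2 : g2 = 0) by nra.
    split; [| exact Hg2].
    pose proof (Hdrift delta ltac:(lra)) as Hlim.
    replace (g1 + g2 * delta / 2) with g1 in Hlim by (rewrite Hg2; field).
    exact Hlim.
  - intros [Hdrift ->].
    exact (PVprod_cvg_of_drift_cvg ap am ap_ge0 ap_nonincr ap_sq am_ge0 am_nonincr am_sq
             g1 Hdrift).
Qed.
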